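(* Let $V$ be a reflexive Banach space, $X$ a Banach space, $\gamma\in\mathcal{L}(V,X)$ with $c_\gamma:=\|\gamma\|_{\mathcal{L}(V,X)}$ and adjoint $\gamma^*\colon X^*\to V^*$. Let $A\colon V\to V^*$, $J\colon X\times X\to\mathbb{R}$ and $f\in V^*$ satisfy: (A1) $A$ is linear and bounded; (A2) $\langle Au,v\rangle_{V^*\times V}=\langle Av,u\rangle_{V^*\times V}$ for all $u,v\in V$; (A3) there is $m_A>0$ with $\langle Au,u\rangle_{V^*\times V}\ge m_A\|u\|_V^2$ for all $u\in V$; (J1) $J$ is locally Lipschitz continuous with respect to its second variable; (J2) there exist $c_0,c_1,c_2\ge 0$ with $\|\partial_2 J(w,v)\|_{X^*}\le c_0+c_1\|v\|_X+c_2\|w\|_X$ for all $w,v\in X$; (J3) there exist $m_\alpha,m_L\ge0$ such that $J_2^0(w_1,v_1;v_2-v_1)+J_2^0(w_2,v_2;v_1-v_2)\le m_\alpha\|v_1-v_2\|_X^2+m_L\|w_1-w_2\|_X\|v_1-v_2\|_X$ for all $w_1,w_2,v_1,v_2\in X$; (S) $m_A>(m_\alpha+m_L)c_\gamma^2$. Define $\mathcal{L}\colon V\times V\to\mathbb{R}$ by $\mathcal{L}(w,v)=\tfrac12\langle Av,v\rangle_{V^*\times V}-\langle f,v\rangle_{V^*\times V}+J(\gamma w,\gamma v)$. Then there exists a unique $u\in V$ such that $0\in\partial_2\mathcal{L}(u,u)$.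
   Context: For a locally Lipschitz function $g$ on a Banach space $Y$, the generalized (Clarke) directional derivative at $x$ in direction $v$ is $g^0(x;v)=\limsup_{y\to x,\lambda\searrow0}\frac{g(y+\lambda v)-g(y)}{\lambda}$, and the Clarke subdifferential is $\partial g(x)=\{\xi\in Y^*:\langle\xi,v\rangle\le g^0(x;v)\ \forall v\in Y\}$. For a function of two variables, $\partial_2$ and $(\cdot)_2^0$ denote the Clarke subdifferential and generalized directional derivative with respect to the second variable. $\|\partial_2J(w,v)\|_{X^*}$ denotes $\sup\{\|\xi\|_{X^*}:\xi\in\partial_2J(w,v)\}$. *)

From HB Require Import structures.
From mathcomp Require Import all_boot all_order all_algebra.
From mathcomp Require Import all_classical all_reals all_analysis.
Set Implicit Arguments. Unset Strict Implicit. Unset Printing Implicit Defensive.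
Import Order.TTheory GRing.Theory Num.Theory.
Import numFieldNormedType.Exports.
Local Open Scope classical_set_scope.
Local Open Scope ring_scope.

Section Defs.
Variable R : realType.

(* Elements of the (topological) dual Y^* are represented as functions Y -> R
   that are linear and continuous. *)
Definition is_dual (Y : normedModType R) (xi : Y -> R) : Prop :=
  (forall (a : R) (u v : Y), xi (a *: u + v) = a * xi u + xi v) /\ continuous xi.

Definition dnorm (Y : normedModType R) (xi : Y -> R) : R :=
  sup [set `|xi v| | v in [set v : Y | `|v| <= 1]].

Definition opnorm (V X : normedModType R) (g : V -> X) : R :=
  sup [set `|g v| | v in [set v : V | `|v| <= 1]].

Definition reflexive_space (V : normedModType R) : Prop :=
  forall Phi : (V -> R) -> R,
    (forall (a : R) (xi eta : V -> R), is_dual xi -> is_dual eta ->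
        Phi (fun v => a * xi v + eta v) = a * Phi xi + Phi eta) ->
    (exists C : R, forall xi, is_dual xi -> `|Phi xi| <= C * dnorm xi) ->
    exists v : V, forall xi, is_dual xi -> Phi xi = xi v.

Definition locally_lipschitz (Y : normedModType R) (g : Y -> R) : Prop :=
  forall x : Y, exists r : R, exists K : R, 0 < r /\
    forall y z : Y, `|y - x| < r -> `|z - x| < r -> `|g y - g z| <= K * `|y - z|.

Definition clarke_dd (Y : normedModType R) (g : Y -> R) (x v : Y) : \bar R :=
  limf_esup (fun p : Y * R => ((g (p.1 + p.2 *: v) - g p.1) / p.2)%:E)
            (filter_prod (nbhs x) (0^'+)).

Definition clarke_subdiff (Y : normedModType R) (g : Y -> R) (x : Y) : set (Y -> R) :=
  [set xi | is_dual xi /\ forall v : Y, ((xi v)%:E <= clarke_dd g x v)%E].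

End Defs.

(* For fixed w, (J3) with w1 = w2 says that the Clarke derivative of J w is
   relaxed monotone with constant malpha.  Restricted to a segment this forces
   J w to be semiconvex (a maximum-principle argument on the segment), so
   v |-> L(w, v) is strongly convex with modulus mA - malpha c_gamma^2 > 0.
   A continuous strongly convex function on a Banach space has a minimizer,
   since minimizing sequences are Cauchy, and a minimizer u satisfies
   0 \in \partial_2 L(w, u).  Testing the stationarity of u1 for w1 and of u2
   for w2 against each other with (J3) gives
   |u1 - u2| <= mL c_gamma^2 / (mA - malpha c_gamma^2) |w1 - w2|,
   a contraction by (S): its fixed point is the solution, and the same
   estimate with w_i = u_i gives uniqueness. *)

From HB Require Import structures.
From mathcomp Require Import all_boot all_order all_algebra.
From mathcomp Require Import all_classical all_reals all_analysis.
From mathcomp Require Import ring lra.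
Import Order.TTheory GRing.Theory Num.Theory.
Import numFieldNormedType.Exports.
Local Open Scope classical_set_scope.
Local Open Scope ring_scope.

Lemma locally_lipschitz_continuous {R : realType} {Y : normedModType R} (g : Y -> R) :
  locally_lipschitz g -> continuous g.
Proof.
move=> gl x; have [r [K [r0 gK]]] := gl x; apply/cvgrPdist_lt => e e0.
have K1 : 0 < `|K| + 1 by rewrite ltr_pwDr // normr_ge0.
near=> y.
have yr : `|y - x| < r by rewrite distrC; near: y; exact: cvgr_dist_lt.
have yK : `|x - y| * (`|K| + 1) < e.
  by rewrite -ltr_pdivlMr //; near: y; apply: cvgr_dist_lt; rewrite ?divr_gt0.
have := gK x y; rewrite subrr normr0 => /(_ r0 yr) gxy.
by apply: le_lt_trans gxy _; have := ler_norm K; have := normr_ge0 (x - y); nra.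
Unshelve. all: by end_near. Qed.

Section ClarkeDerivative.
Context {R : realType} {Y : normedModType R}.
Implicit Types (g h : Y -> R) (x v w : Y).

Lemma le_clarke_dd g x v (y : R -> Y) c :
  y @ 0^'+ --> x ->
  (\forall l \near 0^'+, c <= (g (y l + l *: v) - g (y l)) / l) ->
  (c%:E <= clarke_dd g x v)%E.
Proof.
move=> yx cq; apply: le_ereal_inf_tmp => _ [S [[A B] [/= Ax B0] ABS] <-].
near (0 : R)^'+ => l.
apply: le_ereal_sup_tmp; exists ((g (y l + l *: v) - g (y l)) / l)%:E.
  exists (y l, l) => //; apply: ABS; split; near: l; [exact: yx | exact: B0].
by rewrite lee_fin; near: l.
Unshelve. all: by end_near. Qed.

Lemma clarke_dd_ge0_min g x : (forall y, g x <= g y) -> forall v, (0 <= clarke_dd g x v)%E.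
Proof.
move=> xmin v; apply: (le_clarke_dd _ _ _ (cst x)); first exact: cvg_cst.
near=> l; rewrite divr_ge0 ?subr_ge0 //; apply: ltW; near: l; exact: nbhs_right_gt.
Unshelve. all: by end_near. Qed.

Lemma clarke_subdiff0P g x :
  clarke_subdiff g x (fun=> 0) <-> forall v, (0 <= clarke_dd g x v)%E.
Proof.
split=> [[] //|g0]; split=> //; split; last exact: cst_continuous.
by move=> *; rewrite mulr0 addr0.
Qed.

Lemma clarke_dd_comp_le {Z : normedModType R} h (T : Z -> Y) (z u : Z) w :
  {for z, continuous T} -> (forall y l, T (y + l *: u) = T y + l *: w) ->
  (clarke_dd (h \o T) z u <= clarke_dd h (T z) w)%E.
Proof.
move=> Tz Tu; apply: le_ereal_inf_tmp => _ [S [[A B] [/= Ax B0] ABS] <-].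
pose S' := [set p : Z * R | A (T p.1) /\ B p.2].
have FS' : filter_prod (nbhs z) 0^'+ S'.
  by exists (T @^-1` A, B) => //; split => //; exact: Tz _ Ax.
apply: ge_ereal_inf; exists (ereal_sup
    ((fun p => (((h \o T) (p.1 + p.2 *: u) - (h \o T) p.1) / p.2)%:E) @` S')).
  by exists S'.
apply: ge_ereal_sup => _ [p [Ap Bp] <-]; apply: ereal_sup_ubound.
by exists (T p.1, p.2); [exact: ABS | rewrite /= Tu].
Qed.

Lemma clarke_dd_add_strict g1 g2 x v (l : R) :
  (fun p => (g1 (p.1 + p.2 *: v) - g1 p.1) / p.2) @ filter_prod (nbhs x) 0^'+ --> l ->
  (clarke_dd (g1 \+ g2)%R x v <= l%:E + clarke_dd g2 x v)%E.
Proof.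
move=> /cvgrPdist_lt g1l; rewrite -leeBlDl //.
apply: le_ereal_inf_tmp => _ [S FS <-]; apply/lee_addgt0Pr => e e0; rewrite leeBlDl //.
pose S' := S `&` [set p | `|l - (g1 (p.1 + p.2 *: v) - g1 p.1) / p.2| < e].
apply: ge_ereal_inf; eexists; first by exists S' => //; apply: filterI FS (g1l e e0).
apply: ge_ereal_sup => _ [p [Sp /ltW lp] <-].
have g2S : (((g2 (p.1 + p.2 *: v) - g2 p.1) / p.2)%:E <=
    ereal_sup ((fun p => ((g2 (p.1 + p.2 *: v) - g2 p.1) / p.2)%:E) @` S))%E.
  by apply: ereal_sup_ubound; exists p.
rewrite addeCA -EFinD; apply: le_trans (leeD2r _ g2S); rewrite -EFinD lee_fin.
have -> : ((g1 \+ g2) (p.1 + p.2 *: v) - (g1 \+ g2) p.1) / p.2 =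
    (g1 (p.1 + p.2 *: v) - g1 p.1) / p.2 + (g2 (p.1 + p.2 *: v) - g2 p.1) / p.2.
  by rewrite -mulrDl /=; congr (_ / _); ring.
by move: lp; rewrite distrC => /(le_trans (ler_norm _)); lra.
Qed.

End ClarkeDerivative.

Definition relaxed_monotone {R : realType} {Y : normedModType R} (g : Y -> R) (k : R) :=
  forall v1 v2 : Y,
    (clarke_dd g v1 (v2 - v1)%R + clarke_dd g v2 (v1 - v2)%R <= (k * `|v1 - v2| ^+ 2)%:E)%E.

Definition strongly_convex {R : realType} {Y : normedModType R} (g : Y -> R) (mu : R) :=
  forall (a d : Y) (t : R), 0 <= t <= 1 ->
    g (a + t *: d) <= (1 - t) * g a + t * g (a + d) - mu * t * (1 - t) * `|d| ^+ 2 / 2.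

Section Semiconvexity.
Context {R : realType}.

Lemma near_right0_mul_lt (a e : R) : 0 < e -> \forall l \near 0^'+, `|a| * l < e.
Proof.
move=> e0; have a1 : 0 < `|a| + 1 by rewrite ltr_pwDr // normr_ge0.
near=> l; have l0 : 0 < l by near: l; exact: nbhs_right_gt.
have : l * (`|a| + 1) < e.
  by rewrite -ltr_pdivlMr //; near: l; apply: nbhs_right_lt; rewrite divr_gt0.
by have := normr_ge0 a; nra.
Unshelve. all: by end_near. Qed.

(* The maximum of phi at p and the minimum of phi + eps s at r > p bound
   G^0(p; r - p) and G^0(r; p - r) from below; the two bounds add up to
   k (r - p)^2 + eps (r - p) / 2. *)
Lemma relaxed_monotone1_max_min (G : R -> R) k c eps a p r :
  relaxed_monotone G k -> 0 < eps -> a < p -> p < r ->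
  let phi s := G s + k / 2 * (s * s) - c * s in
  (forall s, a <= s <= p -> phi s <= phi p) ->
  (forall s, p <= s <= r -> phi r + eps * r <= phi s + eps * s) -> False.
Proof.
move=> Gk eps0 ap pr phi pmax rmin; pose s := r - p.
have s0 : 0 < s by rewrite subr_gt0.
have D1 : (((c - k * p) * s - eps * s / 4)%:E <= clarke_dd G p (r - p)%R)%E.
  apply: (le_clarke_dd _ _ _ (fun l => p - l * s)).
    rewrite -[X in _ --> X]subr0; apply: cvgB; first exact: cvg_cst.
    by rewrite -[X in _ --> X](mul0r s); apply: cvgMl; exact: cvg_at_right_filter cvg_id.
  near=> l.
  have l0 : 0 < l by near: l; exact: nbhs_right_gt.
  have ls : `|s| * l < p - a by near: l; apply: near_right0_mul_lt; rewrite subr_gt0.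
  have lk : `|k * s| * l < eps / 2 by near: l; apply: near_right0_mul_lt; rewrite divr_gt0.
  rewrite gtr0_norm // in ls.
  have kls : 0 < (k * s * l + eps / 2) * (l * s).
    by rewrite mulr_gt0 ?mulr_gt0 //; have := ler_norm (- (k * s)); rewrite normrN; nra.
  rewrite -/s subrK ler_pdivlMr //.
  have := pmax (p - l * s) ltac:(apply/andP; split; nra); rewrite /phi; nra.
have D2 : (((k * r - c + eps) * s - eps * s / 4)%:E <= clarke_dd G r (p - r)%R)%E.
  apply: (le_clarke_dd _ _ _ (cst r)); first exact: cvg_cst.
  near=> l.
  have l0 : 0 < l by near: l; exact: nbhs_right_gt.
  have l1 : l < 1 by near: l; exact: nbhs_right_lt.
  have lk : `|k * s| * l < eps / 2 by near: l; apply: near_right0_mul_lt; rewrite divr_gt0.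
  have kls : 0 < (eps / 2 - k * s * l) * (l * s).
    by rewrite mulr_gt0 ?mulr_gt0 //; have := ler_norm (k * s); nra.
  have -> : r + l *: (p - r) = r - l * s by rewrite /s -mulrN opprB.
  rewrite ler_pdivlMr //.
  have := rmin (r - l * s) ltac:(apply/andP; split; rewrite /s; nra); rewrite /phi; nra.
have := le_trans (leeD D1 D2) (Gk p r); rewrite -EFinD lee_fin distrC real_normK ?num_real //.
by have := mulr_gt0 eps0 s0; rewrite /s; lra.
Unshelve. all: by end_near. Qed.

Lemma relaxed_monotone_semiconvex1 (G : R -> R) k :
  continuous G -> relaxed_monotone G k ->
  forall t, 0 <= t <= 1 -> G t <= (1 - t) * G 0 + t * G 1 + k * t * (1 - t) / 2.
Proof.
move=> Gc Gk t /andP[t0 t1].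
pose c := G 1 - G 0 + k / 2.
pose phi s := G s + k / 2 * (s * s) - c * s.
have phic : continuous phi.
  move=> s; apply: cvgB; last by apply: cvgM; [exact: cvg_cst | exact: cvg_id].
  apply: cvgD; first exact: Gc.
  by apply: cvgM; [exact: cvg_cst | apply: cvgM; exact: cvg_id].
have phi0 : phi 0 = G 0 by rewrite /phi; lra.
have phi1 : phi 1 = G 0 by rewrite /phi /c; lra.
suff : phi t <= G 0 by rewrite /phi /c; nra.
rewrite leNgt; apply/negP => phit.
have [p] := EVT_max ler01 (continuous_subspaceT phic); rewrite in_itv /= => /andP[p0 p1] pmax.
have php : G 0 < phi p by apply: lt_le_trans phit (pmax t _); rewrite in_itv /= t0 t1.
have {}p0 : 0 < p by rewrite lt_neqAle p0 andbT; apply: contraTneq php => <-; rewrite phi0 ltxx.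
have {}p1 : p < 1 by rewrite lt_neqAle p1 andbT; apply: contraTneq php => ->; rewrite phi1 ltxx.
pose eps := (phi p - G 0) / 2.
have eps0 : 0 < eps by rewrite divr_gt0 // subr_gt0.
pose psi s := phi s + eps * s.
have psic : continuous psi.
  by move=> s; apply: cvgD; [exact: phic | apply: cvgM; [exact: cvg_cst | exact: cvg_id]].
have [r] := EVT_min (ltW p1) (continuous_subspaceT psic); rewrite in_itv /= => /andP[pr r1] rmin.
have {}pr : p < r.
  rewrite lt_neqAle pr andbT; apply/eqP => rp.
  have := rmin 1; rewrite in_itv /= (ltW p1) lexx -rp /psi phi1 => /(_ isT).
  by have := mulr_gt0 eps0 p0; rewrite /eps; lra.
apply: (relaxed_monotone1_max_min _ _ c _ _ _ _ Gk eps0 p0 pr) => [s /andP[s0 sp] | s /andP[ps sr]].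
  by apply: pmax; rewrite in_itv /= s0 (le_trans sp (ltW p1)).
by apply: rmin; rewrite in_itv /= ps (le_trans sr r1).
Qed.

End Semiconvexity.

Section RelaxedMonotone.
Context {R : realType} {Y : normedModType R}.

Lemma continuous_line (a d : Y) : continuous (fun s : R => a + s *: d).
Proof.
by move=> s; apply: cvgD; [exact: cvg_cst | apply: cvgZ; [exact: cvg_id | exact: cvg_cst]].
Qed.

Lemma relaxed_monotone_line (h : Y -> R) k (a d : Y) :
  relaxed_monotone h k -> relaxed_monotone (fun s : R => h (a + s *: d)) (k * `|d| ^+ 2).
Proof.
move=> hk s1 s2; pose T s := a + s *: d.
have Tline u y l : T (y + l *: u) = T y + l *: (u *: d).
  by rewrite /T scalerDl addrA scalerA.
have TB u v : (u - v) *: d = T u - T v by rewrite /T opprD addrACA subrr add0r scalerBl.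
have := leeD (clarke_dd_comp_le h _ _ _ _ (continuous_line a d s1) (Tline (s2 - s1)))
             (clarke_dd_comp_le h _ _ _ _ (continuous_line a d s2) (Tline (s1 - s2))).
move=> /le_trans; apply; rewrite !TB; apply: le_trans (hk _ _) _.
by rewrite -/(T s1) -TB normrZ exprMn lee_fin mulrA mulrAC.
Qed.

Lemma relaxed_monotone_strongly_convex (h : Y -> R) k :
  continuous h -> relaxed_monotone h k -> strongly_convex h (- k).
Proof.
move=> hc hk a d t t01.
have Gc : continuous (fun s : R => h (a + s *: d)).
  by move=> s; apply: continuous_comp; [exact: continuous_line | exact: hc].
have := relaxed_monotone_semiconvex1 _ _ Gc (relaxed_monotone_line _ _ a d hk) _ t01.
by rewrite scale0r addr0 scale1r; lra.
Qed.

End RelaxedMonotone.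

Section StronglyConvex.
Context {R : realType}.

Lemma strongly_convexD {Y : normedModType R} (g1 g2 : Y -> R) m1 m2 :
  strongly_convex g1 m1 -> strongly_convex g2 m2 -> strongly_convex (g1 \+ g2) (m1 + m2).
Proof.
by move=> g1m g2m a d t t01; have := g1m a d t t01; have := g2m a d t t01; rewrite /=; lra.
Qed.

Lemma strongly_convex_comp_linear {Z Y : normedModType R} (h : Y -> R)
    (T : {linear Z -> Y}) k c :
  0 <= k -> (forall z, `|T z| <= c * `|z|) -> strongly_convex h (- k) ->
  strongly_convex (h \o T) (- (k * c ^+ 2)).
Proof.
move=> k0 Tc hk a d t t01; have := hk (T a) (T d) t t01.
rewrite -linearZ -!raddfD /=.
have Td2 : `|T d| ^+ 2 <= c ^+ 2 * `|d| ^+ 2.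
  by rewrite -exprMn lerXn2r ?nnegrE ?(le_trans _ (Tc d)) ?normr_ge0.
have tt0 : 0 <= t * (1 - t) by case/andP: t01 => t0 t1; rewrite mulr_ge0 ?subr_ge0.
have : 0 <= k * (t * (1 - t)) * (c ^+ 2 * `|d| ^+ 2 - `|T d| ^+ 2).
  by apply: mulr_ge0; [exact: mulr_ge0 | rewrite subr_ge0].
nra.
Qed.

Lemma strongly_convex_bounded_below {Y : normedModType R} (g : Y -> R) mu :
  0 < mu -> {for 0, continuous g} -> strongly_convex g mu -> exists m, forall v, m <= g v.
Proof.
move=> mu0 gc gmu.
have [d d0 gd] : exists2 d : R, 0 < d & forall y : Y, `|y| <= d -> g 0 - 1 < g y.
  move/cvgrPdist_lt : gc => /(_ 1 ltr01) /nbhs_norm0P [e /= e0 ge].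
  exists (e / 2) => [|y ye]; first by rewrite divr_gt0.
  have /ge /= : `|y| < e by apply: le_lt_trans ye _; lra.
  by have := ler_norm (g 0 - g y); lra.
(* For |x| = z > d, comparing g x with g (t x), |t x| = d, gives
   g x - g 0 >= mu z^2 / 2 - b z / d, whose minimum over z is - C. *)
pose b := 1 + mu * d ^+ 2 / 2.
pose C := b ^+ 2 / (2 * mu * d ^+ 2).
have CE : C * (2 * mu * d ^+ 2) = b ^+ 2 by rewrite divfK // !mulf_neq0 ?gt_eqF ?exprn_gt0.
have C0 : 0 <= C by rewrite divr_ge0 ?sqr_ge0 // !mulr_ge0 ?sqr_ge0 // ltW.
exists (g 0 - 1 - C) => x; have [xd|dx] := leP `|x| d; first by have := gd x xd; lra.
set z := `|x| in dx *; have z0 : 0 < z by apply: lt_trans dx.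
pose t := d / z; have tz : t * z = d by rewrite divfK ?gt_eqF.
have t01 : 0 <= t <= 1.
  by apply/andP; split; [rewrite divr_ge0 ?ltW | rewrite ler_pdivrMr // mul1r ltW].
have gtx : g 0 - 1 < g (t *: x).
  by apply: gd; rewrite normrZ ger0_norm ?(proj1 (andP t01)) // tz.
have := gmu 0 x t t01; rewrite !add0r -/z => gmu_tx.
have key : - z + mu * d * (z - d) * z / 2 <= d * (g x - g 0).
  have : - 1 + mu * t * (1 - t) * z ^+ 2 / 2 <= t * (g x - g 0) by lra.
  rewrite -(ler_pM2r z0) -tz; congr (_ <= _); ring.
suff : (2 * mu * d) * (d * (g 0 - 1 - C)) <= (2 * mu * d) * (d * g x).
  by rewrite ler_pM2l ?mulr_gt0 // ler_pM2l.
have : 0 <= mu * d * (d * (g x - g 0) - (- z + mu * d * (z - d) * z / 2)).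
  by rewrite mulr_ge0 ?subr_ge0 // ltW // mulr_gt0.
have := sqr_ge0 (mu * d * z - b); have := mulr_gt0 (mulr_gt0 mu0 d0) d0.
move: CE; rewrite /b; nra.
Qed.

Lemma strongly_convex_has_min {Y : completeNormedModType R} (g : Y -> R) mu :
  0 < mu -> continuous g -> strongly_convex g mu -> exists u, forall v, g u <= g v.
Proof.
move=> mu0 gc gmu.
have [m0 gm0] := strongly_convex_bounded_below _ _ mu0 (gc 0) gmu.
have gm : has_inf (range g) by split; [exists (g 0), 0 | exists m0 => _ [v _ <-]].
pose m := inf (range g).
have mg v : m <= g v by apply: ge_inf; [exact: gm.2 | exists v].
have /choice [xs gxs] : forall n : nat, exists x, g x < m + n.+1%:R^-1.
  move=> n; have n0 : 0 < n.+1%:R^-1 :> R by rewrite invr_gt0 ltr0Sn.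
  by have [_ [x _ <-] gx] := inf_adherent n0 gm; exists x.
have mid n k : mu * `|xs k - xs n| ^+ 2 / 8 < (n.+1%:R^-1 + k.+1%:R^-1) / 2.
  have := gmu (xs n) (xs k - xs n) (1 / 2) ltac:(apply/andP; split; lra).
  rewrite subrKC; have := mg (xs n + (1 / 2) *: (xs k - xs n)).
  have := gxs n; have := gxs k; set a := n.+1%:R^-1; set b := k.+1%:R^-1; lra.
have cxs : cvgn xs.
  apply/cauchy_cvgP/cauchy_ballP => e e0; rewrite near_map2.
  have de : 0 < mu * e ^+ 2 / 8 by rewrite divr_gt0 // mulr_gt0 // exprn_gt0.
  near=> n k; rewrite -ball_normE /= distrC.
  have hn : n.+1%:R^-1 < mu * e ^+ 2 / 8 by near: n; exact: (near_infty_natSinv_lt (PosNum de)).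
  have hk : k.+1%:R^-1 < mu * e ^+ 2 / 8 by near: k; exact: (near_infty_natSinv_lt (PosNum de)).
  have : `|xs k - xs n| ^+ 2 < e ^+ 2.
    rewrite -(ltr_pM2l mu0); have := mid n k.
    set a := n.+1%:R^-1 in hn *; set b := k.+1%:R^-1 in hk *; lra.
  by have := normr_ge0 (xs k - xs n); nra.
set u := lim (xs @ \oo); exists u.
suff gu : g u <= m by move=> v; exact: le_trans gu (mg v).
have gxsu : g \o xs @ \oo --> g u by apply: continuous_cvg; [exact: gc | exact: cxs].
apply/ler_addgt0Pr => e e0; rewrite -(cvg_lim _ gxsu) //; apply: limr_le; first exact: cvgP gxsu.
near=> n; apply: (le_trans (ltW (gxs n))); rewrite lerD2l ltW //.
by near: n; exact: (near_infty_natSinv_lt (PosNum e0)).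
Unshelve. all: by end_near. Qed.

End StronglyConvex.

Section OperatorNorm.
Context {R : realType} {V X : normedModType R}.

Lemma opnorm_ler (T : {linear V -> X}) : continuous T -> forall v, `|T v| <= opnorm T * `|v|.
Proof.
move=> Tc; have /linear_boundedP/pinfty_ex_gt0 [r r0 Tr] := continuous_linear_bounded 0 (Tc 0).
have Tsup : has_sup [set `|T v| | v in [set v : V | `|v| <= 1]].
  split; first by exists `|T 0|, 0 => //=; rewrite normr0 ler01.
  exists r => _ [v /= v1 <-]; by apply: le_trans (Tr v) _; rewrite ler_piMr ?(ltW r0).
move=> v; have [->|v0] := eqVneq v 0; first by rewrite linear0 !normr0 mulr0.
have nv0 : 0 < `|v| by rewrite normr_gt0.
rewrite -ler_pdivrMr //.
have -> : `|T v| / `|v| = `|T (`|v|^-1 *: v)| by rewrite linearZ normrZ normfV normr_id mulrC.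
apply: sup_upper_bound Tsup _ _; exists (`|v|^-1 *: v) => //=.
by rewrite normrZ normfV normr_id mulVf ?gt_eqF.
Qed.

End OperatorNorm.

Section HemivariationalInequality.
Context {R : realType} {V X : completeNormedModType R} (gamma : V -> X)
  (A : V -> V -> R) (J : X -> X -> R) (f : V -> R) (mA malpha mL : R).
Hypothesis gamma_linear :
  forall (a : R) (u v : V), gamma (a *: u + v) = a *: gamma u + gamma v.
Hypothesis gamma_cont : continuous gamma.
Hypothesis f_dual : is_dual f.
Hypothesis A_dual : forall u : V, is_dual (A u).
Hypothesis A_bounded : exists C : R, forall u v : V, `|A u v| <= C * `|u| * `|v|.
Hypothesis A_sym : forall u v : V, A u v = A v u.
Hypothesis A_coercive : forall u : V, mA * `|u| ^+ 2 <= A u u.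
Hypothesis J_lip : forall w : X, locally_lipschitz (J w).
Hypothesis malpha_ge0 : 0 <= malpha.
Hypothesis mL_ge0 : 0 <= mL.
Hypothesis J_relaxed : forall w1 w2 v1 v2 : X,
  (clarke_dd (J w1) v1 (v2 - v1)%R + clarke_dd (J w2) v2 (v1 - v2)%R
     <= (malpha * `|v1 - v2| ^+ 2 + mL * `|w1 - w2| * `|v1 - v2|)%:E)%E.
Hypothesis smallness : (malpha + mL) * opnorm gamma ^+ 2 < mA.

HB.instance Definition _ := GRing.isLinear.Build R V X *:%R gamma gamma_linear.
HB.instance Definition _ := GRing.isLinear.Build R V R^o *:%R f f_dual.1.
HB.instance Definition _ (u : V) := GRing.isLinear.Build R V R^o *:%R (A u) (A_dual u).1.

Local Notation cg := (opnorm gamma).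

Lemma fD u v : f (u + v) = f u + f v. Proof. exact: raddfD. Qed.
Lemma fZ a u : f (a *: u) = a * f u. Proof. exact: linearZ. Qed.
Lemma gammaB u v : gamma (u - v) = gamma u - gamma v. Proof. exact: raddfB. Qed.

Lemma gamma_bound v : `|gamma v| <= cg * `|v|.
Proof. exact: opnorm_ler. Qed.

Lemma modulus_gt0 : 0 < mA - malpha * cg ^+ 2.
Proof. by have := mulr_ge0 mL_ge0 (sqr_ge0 cg); move: smallness; rewrite subr_gt0; lra. Qed.

Definition energy (v : V) := 2^-1 * A v v - f v.
Definition L (w v : V) := energy v + J (gamma w) (gamma v).

Lemma A_diagD a d t : A (a + t *: d) (a + t *: d) = A a a + 2 * t * A a d + t ^+ 2 * A d d.
Proof.
rewrite linearD linearZ /= !(A_sym (a + _)) !linearD !linearZ /= (A_sym d a).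
rewrite /GRing.scale /=; ring.
Qed.

Lemma energy_strongly_convex : strongly_convex energy mA.
Proof.
move=> a d t /andP[t0 t1].
have := A_diagD a d 1; rewrite scale1r expr1n !mul1r mulr1 /energy => Aad.
rewrite A_diagD Aad !fD fZ.
have : 0 <= t * (1 - t) * (A d d - mA * `|d| ^+ 2).
  by rewrite !mulr_ge0 ?subr_ge0 ?A_coercive.
nra.
Qed.

Lemma A_diagB x y : A x x - A y y = A (x - y) (x + y).
Proof. by rewrite A_sym !linearB /= !(A_sym (x + y)) !linearD /= (A_sym x y); ring. Qed.

Lemma A_diag_continuous : continuous (fun v => A v v).
Proof.
have [C AC] := A_bounded; move=> x; apply/cvgrPdist_le => e e0.
have K0 : 0 < `|C| * (2 * `|x| + 1) + 1 by have := normr_ge0 x; have := normr_ge0 C; nra.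
near=> y.
have yx1 : `|x - y| <= 1 by near: y; apply: cvgr_dist_le; [exact: cvg_id | exact: ltr01].
have yxe : `|x - y| * (`|C| * (2 * `|x| + 1) + 1) <= e.
  by rewrite -ler_pdivlMr //; near: y; apply: cvgr_dist_le; [exact: cvg_id | rewrite divr_gt0].
have xy : `|x + y| <= 2 * `|x| + 1.
  by have := ler_distD x y 0; rewrite !subr0 distrC; have := ler_normD x y; lra.
rewrite A_diagB; apply: le_trans (AC _ _) _; apply: le_trans yxe.
have nxy := normr_ge0 (x - y).
have h1 : C * `|x - y| * `|x + y| <= `|C| * `|x - y| * `|x + y|.
  by rewrite -!mulrA ler_wpM2r ?mulr_ge0 // ler_norm.
have h2 : `|C| * `|x - y| * `|x + y| <= `|C| * `|x - y| * (2 * `|x| + 1).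
  by rewrite ler_wpM2l ?mulr_ge0.
lra.
Unshelve. all: by end_near. Qed.

Lemma energy_continuous : continuous energy.
Proof.
move=> x; apply: cvgB; last exact: f_dual.2.
by apply: cvgM; [exact: cvg_cst | exact: A_diag_continuous].
Qed.

Lemma energy_quotient_cvg u d :
  (fun p => (energy (p.1 + p.2 *: d) - energy p.1) / p.2) @ filter_prod (nbhs u) 0^'+
    --> A u d - f d.
Proof.
have qE : {near filter_prod (nbhs u) 0^'+,
    (fun p => A d p.1 + p.2 / 2 * A d d - f d) =1
    (fun p => (energy (p.1 + p.2 *: d) - energy p.1) / p.2)}.
  near=> y l => /=.
  have l0 : l != 0 by rewrite gt_eqF //; near: l; exact: nbhs_right_gt.
  by rewrite /energy A_diagD fD fZ (A_sym y d); field.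
apply: cvg_trans (near_eq_cvg qE) _; rewrite A_sym.
apply: cvgB; last exact: cvg_cst.
rewrite -[X in _ --> X]addr0; apply: cvgD.
  by apply: continuous_cvg; [exact: (A_dual d).2 | exact: cvg_fst].
have snd0 : (fun p : V * R => p.2) @ filter_prod (nbhs u) 0^'+ --> 0.
  exact: cvg_trans cvg_snd (cvg_at_right_filter cvg_id).
rewrite -{2}(mul0r (A d d)) -{2}(mul0r (2^-1 : R)).
by apply: cvgM; [apply: cvgM; [exact: snd0 | exact: cvg_cst] | exact: cvg_cst].
Unshelve. all: by end_near. Qed.

Lemma J_relaxed_monotone w : relaxed_monotone (J w) malpha.
Proof. by move=> v1 v2; have := J_relaxed w w v1 v2; rewrite subrr normr0 mulr0 mul0r addr0. Qed.

Lemma L_strongly_convex w : strongly_convex (L w) (mA - malpha * cg ^+ 2).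
Proof.
have Jsc := relaxed_monotone_strongly_convex _ _
  (locally_lipschitz_continuous _ (J_lip (gamma w))) (J_relaxed_monotone (gamma w)).
exact: strongly_convexD energy_strongly_convex
  (strongly_convex_comp_linear _ gamma _ _ malpha_ge0 gamma_bound Jsc).
Qed.

Lemma L_continuous w : continuous (L w).
Proof.
move=> v; apply: cvgD; first exact: energy_continuous.
by apply: continuous_comp; [exact: gamma_cont | exact/locally_lipschitz_continuous/J_lip].
Qed.

Lemma L_clarke_dd_le w u d :
  (clarke_dd (L w) u d <= (A u d - f d)%:E + clarke_dd (J (gamma w)) (gamma u) (gamma d))%E.
Proof.
apply: le_trans (clarke_dd_add_strict _ _ _ _ _ (energy_quotient_cvg u d)) _.
apply: leeD2l; apply: clarke_dd_comp_le; first exact: gamma_cont.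
by move=> y l; rewrite addrC gamma_linear addrC.
Qed.

Lemma stationary_estimate w1 w2 u1 u2 :
  (forall d, (0 <= clarke_dd (L w1) u1 d)%E) -> (forall d, (0 <= clarke_dd (L w2) u2 d)%E) ->
  (mA - malpha * cg ^+ 2) * `|u1 - u2| ^+ 2 <= mL * cg ^+ 2 * `|w1 - w2| * `|u1 - u2|.
Proof.
move=> st1 st2.
have := leeD (le_trans (st1 (u2 - u1)) (L_clarke_dd_le w1 u1 (u2 - u1)))
             (le_trans (st2 (u1 - u2)) (L_clarke_dd_le w2 u2 (u1 - u2))).
rewrite adde0 addeACA !gammaB -EFinD => /le_trans /(_ (leeD2l _ (J_relaxed _ _ _ _))).
rewrite -EFinD lee_fin -!gammaB.
have -> : A u1 (u2 - u1) - f (u2 - u1) + (A u2 (u1 - u2) - f (u1 - u2)) =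
    - A (u1 - u2) (u1 - u2).
  rewrite -[u2 - u1]opprB !raddfN /= (A_sym u1) (A_sym u2).
  by have := raddfB (A (u1 - u2)) u1 u2; rewrite /= => ->; ring.
have gz := gamma_bound (u1 - u2); have gw := gamma_bound (w1 - w2).
have gz2 : malpha * `|gamma (u1 - u2)| ^+ 2 <= malpha * (cg ^+ 2 * `|u1 - u2| ^+ 2).
  by rewrite ler_wpM2l // -exprMn lerXn2r ?nnegrE ?(le_trans _ gz) ?normr_ge0.
have gwz : mL * (`|gamma (w1 - w2)| * `|gamma (u1 - u2)|) <=
    mL * ((cg * `|w1 - w2|) * (cg * `|u1 - u2|)).
  by rewrite ler_wpM2l // ler_pM ?normr_ge0.
have := A_coercive (u1 - u2); lra.
Qed.

Let k := mL * cg ^+ 2 / (mA - malpha * cg ^+ 2).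

Lemma contraction_constant : 0 <= k < 1.
Proof.
rewrite divr_ge0 ?(ltW modulus_gt0) ?(mulr_ge0 mL_ge0 (sqr_ge0 cg)) //=.
by rewrite ltr_pdivrMr ?modulus_gt0 // mul1r; move: smallness; lra.
Qed.

Lemma stationary_lipschitz w1 w2 u1 u2 :
  (forall d, (0 <= clarke_dd (L w1) u1 d)%E) -> (forall d, (0 <= clarke_dd (L w2) u2 d)%E) ->
  `|u1 - u2| <= k * `|w1 - w2|.
Proof.
move=> st1 st2; have := stationary_estimate _ _ _ _ st1 st2.
have [->|z0] := eqVneq `|u1 - u2| 0.
  by rewrite mulr_ge0 ?normr_ge0 ?(andP contraction_constant).1.
rewrite [`|u1 - u2| ^+ 2]expr2 mulrA ler_pM2r ?lt_def ?z0 ?normr_ge0 // => est.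
by rewrite /k mulrAC ler_pdivlMr ?modulus_gt0 // mulrC.
Qed.

Lemma stationary_fixed_point : exists u, forall d, (0 <= clarke_dd (L u) u d)%E.
Proof.
have /choice [S stS] : forall w, exists u, forall d, (0 <= clarke_dd (L w) u d)%E.
  move=> w; have [u umin] :=
    strongly_convex_has_min _ _ modulus_gt0 (L_continuous w) (L_strongly_convex w).
  by exists u; exact: clarke_dd_ge0_min.
have /andP[k0 k1] := contraction_constant.
have S_contraction : is_contraction (totalfun S).
  exists (NngNum k0); split => // -[w1 w2] _ /=; exact: stationary_lipschitz.
have [u _ uS] := banach_fixed_point S_contraction closedT (ex_intro _ 0 I).
by exists u; rewrite {2}uS.
Qed.

Lemma stationary_unique u1 u2 :
  (forall d, (0 <= clarke_dd (L u1) u1 d)%E) -> (forall d, (0 <= clarke_dd (L u2) u2 d)%E) ->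
  u1 = u2.
Proof.
move=> st1 st2; have /andP[_ k1] := contraction_constant.
have := stationary_lipschitz _ _ _ _ st1 st2; have := normr_ge0 (u1 - u2) => z0 zk.
by apply/eqP; rewrite -subr_eq0 -normr_eq0 eq_le z0 andbT; nra.
Qed.

Lemma L_unique_stationary : exists! u, clarke_subdiff (L u) u (fun=> 0).
Proof.
have [u st] := stationary_fixed_point; exists u; split; first exact/clarke_subdiff0P.
by move=> v /clarke_subdiff0P; exact: stationary_unique.
Qed.

End HemivariationalInequality.

Theorem lemma3 (R : realType) (V X : completeNormedModType R)
  (gamma : V -> X) (A : V -> V -> R) (J : X -> X -> R) (f : V -> R)
  (mA c0 c1 c2 malpha mL : R) :
  reflexive_space V ->
  (* gamma in L(V,X) *)
  (forall (a : R) (u v : V), gamma (a *: u + v) = a *: gamma u + gamma v) ->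
  continuous gamma ->
  (* f in V^* *)
  is_dual f ->
  (* (A1): A : V -> V^* linear and bounded *)
  (forall u : V, is_dual (A u)) ->
  (forall (a : R) (u w v : V), A (a *: u + w) v = a * A u v + A w v) ->
  (exists C : R, forall u v : V, `|A u v| <= C * `|u| * `|v|) ->
  (* (A2) *)
  (forall u v : V, A u v = A v u) ->
  (* (A3) *)
  0 < mA -> (forall u : V, mA * `|u| ^+ 2 <= A u u) ->
  (* (J1) *)
  (forall w : X, locally_lipschitz (J w)) ->
  (* (J2) *)
  0 <= c0 -> 0 <= c1 -> 0 <= c2 ->
  (forall w v : X, forall xi, clarke_subdiff (J w) v xi ->
      dnorm xi <= c0 + c1 * `|v| + c2 * `|w|) ->
  (* (J3) *)
  0 <= malpha -> 0 <= mL ->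
  (forall w1 w2 v1 v2 : X,
      (clarke_dd (J w1) v1 (v2 - v1)%R + clarke_dd (J w2) v2 (v1 - v2)%R
       <= (malpha * `|v1 - v2| ^+ 2 + mL * `|w1 - w2| * `|v1 - v2|)%:E)%E) ->
  (* (S) *)
  (malpha + mL) * opnorm gamma ^+ 2 < mA ->
  let L := fun w v : V => 2^-1 * A v v - f v + J (gamma w) (gamma v) in
  exists! u : V, clarke_subdiff (L u) u (fun _ => 0).
Proof.
move=> _ gamma_lin gamma_cont f_dual A_dual _ A_bounded A_sym _ A_coercive J_lip
  _ _ _ _ malpha_ge0 mL_ge0 J_relaxed smallness L.
exact: (L_unique_stationary _ _ _ _ _ _ _ gamma_lin gamma_cont f_dual A_dual
  A_bounded A_sym A_coercive J_lip malpha_ge0 mL_ge0 J_relaxed smallness).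
Qed.
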